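(* Let $\alpha\in(1,2)$, $\sigma:\mathbb{R}\to(0,\infty)$ continuous, and let $Y$ be the time-changed symmetric $\alpha$-stable process described in the context. If $$\delta_+:=\sup_{x>0}x^{\alpha-1}\int_x^\infty\sigma(z)^{-\alpha}dz<\infty,$$ then for every $x>0$, $$\mathrm{II}^+(\varphi)(x)\le\frac{4}{\Gamma(\alpha/2)^2(\alpha-1)}\delta_+,$$ where $\varphi(x)=x^{(\alpha-1)/2}$.
   Context: $X$ is the symmetric $\alpha$-stable process on $\mathbb{R}$ (generator $-(-\Delta)^{\alpha/2}$), and $Y_t=X_{\zeta_t}$ with $\zeta_t=\inf\{s>0:\int_0^s\sigma(X_u)^{-\alpha}du>t\}$. For a positive function $f$ on $(0,\infty)$ define $$\mathrm{II}^+(f)(x)=\frac{1}{\Gamma(\alpha/2)^2f(x)}\int_0^xz^{\alpha-2}\left(\int_z^\infty f(y)\sigma(y)^{-\alpha}dy\right)dz,\quad x>0$$ (an upper bound for $U^{(0,\infty)}f(x)/f(x)$, where $U^{(0,\infty)}f(x)=\mathbb{E}_x\int_0^{\tau_{(0,\infty)}}f(Y_t)dt$ and $\tau_{(0,\infty)}$ is the exit time of $Y$ from $(0,\infty)$). *)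

From HB Require Import structures.
From mathcomp Require Import all_boot all_order all_algebra.
From mathcomp Require Import all_classical all_reals all_analysis.
Set Implicit Arguments. Unset Strict Implicit. Unset Printing Implicit Defensive.
Import Order.TTheory GRing.Theory Num.Theory.
Import numFieldNormedType.Exports.
Local Open Scope classical_set_scope.
Local Open Scope ring_scope.
Local Open Scope ereal_scope.

Section Defs.
Variable R : realType.
Notation mu := (@lebesgue_measure R).

Definition Gamma (s : R) : R :=
  fine (\int[mu]_(t in `]0%R, +oo[) ((t `^ (s - 1)) * expR (- t))%:E).

Definition tail_int (sigma : R -> R) (alpha : R) (f : R -> R) (z : R) : \bar R :=
  \int[mu]_(y in `]z, +oo[) (f y * (sigma y) `^ (- alpha))%:E.

Definition II_plus (sigma : R -> R) (alpha : R) (f : R -> R) (x : R) : \bar R :=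
  ((Gamma (alpha / 2) ^+ 2 * f x)^-1)%:E *
  \int[mu]_(z in `]0%R, x[) ((z `^ (alpha - 2))%:E * tail_int sigma alpha f z).

Definition delta_plus (sigma : R -> R) (alpha : R) : \bar R :=
  ereal_sup [set ((x `^ (alpha - 1))%:E *
                  \int[mu]_(z in `]x, +oo[) ((sigma z) `^ (- alpha))%:E)
            | x in `]0%R, +oo[].

End Defs.

From HB Require Import structures.
From mathcomp Require Import all_boot all_order all_algebra.
From mathcomp Require Import all_classical all_reals all_analysis.
From mathcomp Require Import measurable_realfun lra ring.
Import Order.TTheory GRing.Theory Num.Theory.
Import numFieldNormedType.Exports.
Local Open Scope classical_set_scope.
Local Open Scope ring_scope.

(* With beta = (alpha - 1) / 2 and s = sigma^(-alpha), the hypothesis bounds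
   the tail S(t) = int_t^oo s by delta_+ t^(-2 beta).  Cutting y^beta at the
   geometric levels z^beta r^j (r > 1) and integrating slice by slice gives
   int_z^oo y^beta s(y) dy <= delta_+ z^(-beta) (1 + r), a discrete form of the
   integration by parts z^beta S(z) + beta int_z^oo y^(beta-1) S(y) dy; letting
   r decrease to 1 the bound is 2 delta_+ z^(-beta).  Then
   z^(alpha-2) 2 delta_+ z^(-beta) = 2 delta_+ z^(beta-1), whose integral over
   (0, x) is 2 delta_+ x^beta / beta, and dividing by Gamma(alpha/2)^2 x^beta
   gives the constant 4 / (Gamma(alpha/2)^2 (alpha - 1)). *)

Lemma min_le_staircase {R : realDomainType} (a : nat -> R) (t : R) n :
  Num.min t (a n) <= a 0%N + \sum_(j < n) (a j.+1 - a j) * (a j < t)%R%:R.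
Proof.
elim: n => [|n IH]; first by rewrite big_ord0 addr0 ge_min lexx orbT.
rewrite big_ord_recr /= ge_min; apply/orP.
have [ant|tan] := ltP (a n) t.
- by right; move: IH; rewrite (min_r (ltW ant)) mulr1; lra.
- by left; move: IH; rewrite min_l// mulr0 addr0.
Qed.

Lemma exprn_unbounded {R : realType} (M r : R) : 1 < r -> exists n, M <= r ^+ n.
Proof.
move=> r1; have r0 : 0 < r by apply: lt_trans r1.
have : (r^-1) ^+ n @[n --> \oo] --> 0.
  by apply: cvg_expr; rewrite gtr0_norm ?invr_gt0// invf_lt1.
move=> /cvgr0_norm_lt/(_ (`|M| + 1)^-1); rewrite invr_gt0 ltr_wpDl// => /(_ isT).
move=> [N _ /(_ N (leqnn N))]; rewrite exprVn gtr0_norm ?invr_gt0 ?exprn_gt0//.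
rewrite ltf_pV2 ?posrE ?ltr_wpDl ?exprn_gt0// => Mr; exists N.
by apply: le_trans (ler_norm M) (ltW (lt_trans _ Mr)); rewrite ltrDl.
Qed.

Lemma lee_mul1D_limit {R : realType} (x : \bar R) (c : R) : 0 <= c ->
  (forall r, 1 < r -> (x <= (c * (1 + r))%:E)%E) -> (x <= (c * 2)%:E)%E.
Proof.
move=> c0 xle; apply/lee_addgt0Pr => e e0.
have c1 : 0 < c + 1 by rewrite ltr_wpDl.
set q := e / (c + 1); have q0 : 0 < q by rewrite divr_gt0.
have eq : e = q * (c + 1) by rewrite /q divfK// gt_eqF.
apply: le_trans (xle (1 + q) _) _; first by rewrite ltrDl.
by rewrite -EFinD lee_fin eq; nra.
Qed.

Lemma powRV_lt {R : realType} (a y b : R) : 0 <= a -> 0 <= y -> 0 < b ->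
  (a `^ b^-1 < y) = (a < y `^ b).
Proof.
move=> a0 y0 b0; have b'0 : 0 < b^-1 by rewrite invr_gt0.
apply/idP/idP => h.
- have := gt0_ltr_powR b0 (powR_ge0 _ _) y0 h.
  by rewrite -powRrM mulVf ?gt_eqF// powRr1.
- have := gt0_ltr_powR b'0 a0 (powR_ge0 _ _) h.
  by rewrite -powRrM mulfV ?gt_eqF// powRr1.
Qed.

Section integral_lemmas.
Context {R : realType}.
Local Notation mu := (@lebesgue_measure R).

(* Unlike [ge0_le_integral], no measurability is required: the integrand
   [z |-> z^(alpha-2) * tail_int sigma alpha f z] is never shown measurable. *)
Lemma ge0_le_integral_nomeas (D : set R) (f g : R -> \bar R) :
  (forall x, D x -> 0 <= f x)%E -> (forall x, D x -> f x <= g x)%E ->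
  (\int[mu]_(x in D) f x <= \int[mu]_(x in D) g x)%E.
Proof.
move=> f0 fg; have g0 x : D x -> (0 <= g x)%E.
  by move=> Dx; exact: le_trans (f0 _ Dx) (fg _ Dx).
rewrite (ge0_integralE mu f0) (ge0_integralE mu g0).
apply: ereal_sup_le => _ [h /= hf <-]; exists h => //= x.
by apply: le_trans (hf x) _; rewrite /patch; case: ifPn => // /set_mem /fg.
Qed.

Lemma nneseries_geometric_le (a q : R) : 0 <= a -> 0 < q < 1 ->
  (\sum_(j <oo) (a * q ^+ j)%:E <= (a / (1 - q))%:E)%E.
Proof.
move=> a0 /andP[q0 q1].
apply: lime_le.
  by apply: is_cvg_nneseries => n _ _; rewrite lee_fin mulr_ge0// exprn_ge0// ltW.
apply: nearW => n; rewrite sumEFin lee_fin.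
have := @geometric_le_lim R n a q a0 q0; rewrite gtr0_norm//.
by move=> /(_ q1); rewrite /series /geometric /=.
Qed.

Lemma integral_powR_itvcc (a x b : R) : 0 < a < x -> b != 0 ->
  (\int[mu]_(z in `[a, x]) (z `^ (b - 1))%:E = (x `^ b / b)%:E - (a `^ b / b)%:E)%E.
Proof.
move=> /andP[a0 ax] b0.
rewrite ![_ `^ b / b]mulrC.
have F'f (z : R) : 0 < z -> is_derive z 1 (fun y : R => b^-1 * y `^ b) (z `^ (b - 1)).
  move=> z0; have := is_deriveZ (b^-1) (is_derive1_powR b z0).
  by move/is_derive_eq; apply; rewrite /GRing.scale/= mulrA mulVf ?mul1r.
have cF (z : R) : 0 < z -> {for z, continuous (fun y : R => b^-1 * y `^ b)}.
  by move=> z0; case: (F'f z z0) => /derivable1_diffP/differentiable_continuous.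
apply: (continuous_FTC2 (f := fun z => z `^ (b - 1)) (F := fun y => b^-1 * y `^ b) ax).
- apply: continuous_in_subspaceT => z; rewrite inE/= in_itv/= => /andP[az _].
  apply: differentiable_continuous; apply/derivable1_diffP.
  by apply: derivable_powR; rewrite in_itv/= andbT; exact: lt_le_trans az.
- split; [|exact/cvg_at_right_filter/cF|exact/cvg_at_left_filter/cF/(lt_trans a0)].
  by move=> z; rewrite in_itv/= => /andP[az _]; case: (F'f z (lt_trans a0 az)).
- move=> z; rewrite in_itv/= => /andP[az _].
  by rewrite derive1E; apply: derive_val; exact/F'f/(lt_trans a0).
Qed.

Lemma itvoo0_bigcup_itvco (x : R) : 0 < x ->
  `]0, x[%classic = \bigcup_n `[x / n.+2%:R, x[%classic.
Proof.
move=> x0; apply/seteqP; split => z /=; last first.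
  move=> [n _]; rewrite /= !in_itv/= => /andP[xz ->]; rewrite andbT.
  by apply: lt_le_trans xz; rewrite divr_gt0.
rewrite in_itv/= => /andP[z0 zx].
have [n xzn] : exists n, x / z < n.+2%:R.
  exists (Num.bound (x / z)); apply: lt_le_trans (archi_boundP _) _.
    by rewrite divr_ge0// ltW.
  by rewrite ler_nat leqW.
exists n => //; rewrite /= in_itv/= zx andbT.
by rewrite ler_pdivrMr// mulrC -ler_pdivrMr// ltW.
Qed.

Lemma integral_powR_itvoo_le (x b : R) : 0 < x -> 0 < b ->
  (\int[mu]_(z in `]0%R, x[) (z `^ (b - 1))%:E <= (x `^ b / b)%:E)%E.
Proof.
move=> x0 b0.
have mpow (D : set R) : measurable_fun D (fun z : R => (z `^ (b - 1))%:E).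
  by apply/measurable_EFinP; apply: measurable_funTS; exact: measurable_powR.
pose F n := `[x / n.+2%:R, x[%classic.
rewrite itvoo0_bigcup_itvco//.
have ndF : nondecreasing_seq F.
  move=> n m nm; apply/subsetPset => z; rewrite /F/= !in_itv/= => /andP[xz ->].
  rewrite andbT; apply: le_trans xz; rewrite ler_pM2l// lef_pV2 ?posrE// ler_nat.
  by rewrite !ltnS.
have Fcvg := ge0_nondecreasing_set_cvg_integral (mu := mu) ndF (fun n => measurable_itv _)
  (fun n => mpow _) (fun n z _ => powR_ge0 z (b - 1)).
rewrite -(cvg_lim _ Fcvg)//; apply: lime_le; first by apply/cvg_ex; eexists; exact: Fcvg.
apply: nearW => n; rewrite /F integral_itv_bndo_bndc//.
have a0 : 0 < x / n.+2%:R by rewrite divr_gt0.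
have ax : x / n.+2%:R < x by rewrite ltr_pdivrMr// ltr_pMr// ltr1n.
rewrite integral_powR_itvcc ?a0 ?gt_eqF// lee_fin lerBlDr lerDl.
by rewrite divr_ge0 ?powR_ge0 ?ltW.
Qed.

End integral_lemmas.

Section tail_moment.
Context {R : realType}.
Local Notation mu := (@lebesgue_measure R).
Variables (s : R -> R) (beta D : R).
Hypothesis s_ge0 : forall y, 0 <= s y.
Hypothesis s_meas : measurable_fun setT s.
Hypothesis beta_gt0 : 0 < beta.
Hypothesis tail_s_le : forall t, 0 < t ->
  (\int[mu]_(y in `]t, +oo[) (s y)%:E <= (D / t `^ (beta * 2))%:E)%E.

Let D_ge0 : 0 <= D.
Proof.
have := @tail_s_le 1 ltr01; rewrite powR1 divr1 -lee_fin; apply: le_trans.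
by apply: integral_ge0 => y _; rewrite lee_fin.
Qed.

Section staircase.
Variables (z r : R).
Hypotheses (z_gt0 : 0 < z) (r_gt1 : 1 < r).

Let w := z `^ beta.
Let a j := w * r ^+ j.
Let u j := a j `^ beta^-1.
Let step j := (fun y => ((a j.+1 - a j) * s y)%:E) \_ `]u j, +oo[.

Let r_gt0 : 0 < r. Proof. exact: lt_trans r_gt1. Qed.
Let w_gt0 : 0 < w. Proof. exact: powR_gt0. Qed.
Let a_gt0 j : 0 < a j. Proof. by rewrite mulr_gt0// exprn_gt0. Qed.

Let a_incr j : a j.+1 - a j = w * r ^+ j * (r - 1).
Proof. by rewrite /a exprS; ring. Qed.

Let a_incr_ge0 j : 0 <= a j.+1 - a j.
Proof. by rewrite a_incr !mulr_ge0 ?exprn_ge0 ?subr_ge0 ?ltW. Qed.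

Let z_le_u j : z <= u j.
Proof.
have -> : z = w `^ beta^-1 by rewrite /w -powRrM mulfV ?gt_eqF// powRr1// ltW.
apply: ge0_ler_powR; rewrite ?invr_ge0 ?nnegrE; try exact: ltW.
by rewrite /a ler_peMr ?exprn_ege1// ltW.
Qed.

Let u_powR j : u j `^ (beta * 2) = a j ^+ 2.
Proof.
by rewrite /u -powRrM mulrA mulVf ?gt_eqF// mul1r powR_mulrn// ltW.
Qed.

Let step_ge0 j y : (0 <= step j y)%E.
Proof. by rewrite /step/patch; case: ifP => // _; rewrite lee_fin mulr_ge0. Qed.

Let step_meas j : measurable_fun setT (step j).
Proof.
apply/(measurable_restrictT _ _).1 => //; apply/measurable_EFinP.
by apply: measurable_funM => //; exact: measurable_funTS.
Qed.

Let stepE j y : 0 < y ->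
  step j y = ((a j.+1 - a j) * (a j < y `^ beta)%R%:R * s y)%:E.
Proof.
move=> y0; rewrite /step/patch mem_setE/= in_itv/= andbT.
by rewrite powRV_lt ?ltW//; case: ltP; rewrite ?mulr1 ?mulr0 ?mul0r.
Qed.

Let powR_mul_le_staircase y : z < y ->
  ((y `^ beta * s y)%:E <= (w * s y)%:E + \sum_(j <oo) step j y)%E.
Proof.
move=> zy; have y0 : 0 < y by apply: lt_trans zy.
have [n ywn] := exprn_unbounded (y `^ beta / w) r r_gt1.
have := min_le_staircase a (y `^ beta) n.
rewrite min_l; last by rewrite /a mulrC -ler_pdivrMr.
rewrite /a expr0 mulr1 -/(a _) => le_staircase.
apply: (@le_trans _ _ ((w * s y)%:E + \sum_(0 <= j < n) step j y)%E); last first.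
  rewrite leeD2l//; apply: (@nneseries_lim_ge _ (step^~ y) xpredT) => j _ _.
  exact: step_ge0.
rewrite (eq_bigr _ (fun j _ => stepE j y y0)) sumEFin -EFinD lee_fin -mulr_suml -mulrDl.
by rewrite ler_wpM2r// big_mkord.
Qed.

Let integral_step j : (\int[mu]_(y in `]z, +oo[) step j y =
  (a j.+1 - a j)%:E * \int[mu]_(y in `]u j, +oo[) (s y)%:E)%E.
Proof.
rewrite /step -integral_mkcondr.
have -> : `]z, +oo[%classic `&` `]u j, +oo[%classic = `]u j, +oo[%classic.
  apply/setIidr => y /=; rewrite !in_itv/= !andbT; exact: le_lt_trans (z_le_u j).
under eq_integral do rewrite EFinM.
rewrite ge0_integralZl_EFin//; first by move=> y _; rewrite lee_fin.
exact/measurable_EFinP/measurable_funTS.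
Qed.

Let integral_step_le j :
  (\int[mu]_(y in `]z, +oo[) step j y <= (D / w * (r - 1) * r^-1 ^+ j)%:E)%E.
Proof.
rewrite integral_step; have u_gt0 : 0 < u j by apply: lt_le_trans (z_le_u j).
have incr_ge0 : (0 <= (a j.+1 - a j)%:E)%E by rewrite lee_fin.
apply: le_trans (lee_wpmul2l incr_ge0 (tail_s_le _ u_gt0)) _.
rewrite -EFinM lee_fin u_powR a_incr /a exprVn le_eqVlt; apply/predU1P; left.
by field; rewrite expf_neq0 ?gt_eqF.
Qed.

Lemma tail_moment_le_staircase :
  (\int[mu]_(y in `]z, +oo[) (y `^ beta * s y)%:E <= (D / w * (1 + r))%:E)%E.
Proof.
have series_ge0 y : (0 <= \sum_(j <oo) step j y)%E.
  by apply: nneseries_ge0 => j _ _; exact: step_ge0.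
apply: (@le_trans _ _
    (\int[mu]_(y in `]z, +oo[) ((w * s y)%:E + \sum_(j <oo) step j y))%E).
  apply: ge0_le_integral_nomeas => y; first by rewrite lee_fin mulr_ge0// powR_ge0.
  by rewrite /= in_itv/= andbT; exact: powR_mul_le_staircase.
rewrite ge0_integralD//; last 3 first.
- by move=> y _; rewrite lee_fin mulr_ge0// ltW.
- by apply/measurable_EFinP; apply: measurable_funM => //; exact: measurable_funTS.
- apply: ge0_emeasurable_sum => [j y _ _|j _]; first exact: step_ge0.
  exact: measurable_funTS (step_meas j).
rewrite integral_nneseries//; last by move=> j; exact: measurable_funTS (step_meas j).
have w_ge0 : (0 <= w%:E)%E by rewrite lee_fin ltW.
have head_le : (\int[mu]_(y in `]z, +oo[) (w * s y)%:E <= (D / w)%:E)%E.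
  under eq_integral do rewrite EFinM.
  rewrite ge0_integralZl_EFin//; last 2 first.
  - by move=> y _; rewrite lee_fin.
  - exact/measurable_EFinP/measurable_funTS.
  apply: le_trans (lee_wpmul2l w_ge0 (tail_s_le _ z_gt0)) _.
  rewrite -EFinM lee_fin powRrM powR_mulrn ?powR_ge0// -/w le_eqVlt.
  by apply/predU1P; left; field; rewrite gt_eqF.
have series_le :
    (\sum_(j <oo) \int[mu]_(y in `]z, +oo[) step j y <= (D / w * r)%:E)%E.
  apply: le_trans (lee_nneseries _ (fun j _ => integral_step_le j)) _.
    by move=> j _ _; apply: integral_ge0 => y _; exact: step_ge0.
  have c_ge0 : 0 <= D / w * (r - 1).
    by rewrite mulr_ge0 ?divr_ge0 ?subr_ge0 ?(ltW w_gt0) ?(ltW r_gt1).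
  have q_range : 0 < r^-1 < 1 by rewrite invr_gt0 r_gt0 invf_lt1.
  apply: le_trans (nneseries_geometric_le _ _ c_ge0 q_range) _.
  rewrite lee_fin le_eqVlt; apply/predU1P; left.
  by field; rewrite !gt_eqF ?subr_gt0.
apply: le_trans (leeD head_le series_le) _.
by rewrite -EFinD lee_fin mulrDr mulr1.
Qed.

End staircase.

Lemma tail_moment_le z : 0 < z ->
  (\int[mu]_(y in `]z, +oo[) (y `^ beta * s y)%:E <= (D / z `^ beta * 2)%:E)%E.
Proof.
move=> z_gt0; apply: lee_mul1D_limit => [|r r_gt1].
  by rewrite divr_ge0// powR_ge0.
exact: tail_moment_le_staircase.
Qed.

End tail_moment.

Section II_plus_bound.
Context {R : realType}.
Local Notation mu := (@lebesgue_measure R).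
Variables (alpha : R) (sigma : R -> R).
Hypothesis alpha_gt1 : 1 < alpha.

Local Notation beta := ((alpha - 1) / 2).

Let beta_gt0 : 0 < beta. Proof. by rewrite divr_gt0// subr_gt0. Qed.

Lemma delta_plus_ge0 : (0 <= delta_plus sigma alpha)%E.
Proof.
apply: le_ereal_sup_tmp; exists ((1 `^ (alpha - 1))%:E *
    \int[mu]_(z in `]1%R, +oo[) ((sigma z) `^ (- alpha))%:E)%E.
  by exists 1 => //; rewrite /= in_itv/= andbT.
apply: mule_ge0; first by rewrite lee_fin powR_ge0.
by apply: integral_ge0 => y _; rewrite lee_fin powR_ge0.
Qed.

Lemma tail_sigma_le d t : delta_plus sigma alpha = d%:E -> 0 < t ->
  (\int[mu]_(y in `]t, +oo[) (sigma y `^ (- alpha))%:E <= (d / t `^ (beta * 2))%:E)%E.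
Proof.
move=> dE t_gt0; have -> : beta * 2 = alpha - 1 by rewrite divfK ?pnatr_eq0.
rewrite mulrC EFinM lee_pdivlMl ?powR_gt0// -dE.
by apply: ereal_sup_ubound; exists t => //; rewrite /= in_itv/= andbT.
Qed.

Lemma II_plus_le c x : 0 <= c -> 0 < x ->
  (forall z, 0 < z ->
    (tail_int sigma alpha (fun y : R => (y `^ beta)%R) z <= (c / z `^ beta)%:E)%E) ->
  (II_plus sigma alpha (fun y : R => (y `^ beta)%R) x <=
   (c * 2 / (Gamma (alpha / 2) ^+ 2 * (alpha - 1)))%:E)%E.
Proof.
move=> c_ge0 x_gt0 tail_le; rewrite /II_plus.
set G := Gamma (alpha / 2) ^+ 2.
(* For [G = 0] both sides vanish ([0^-1 = 0]). *)
have [->|G_neq0] := eqVneq G 0; first by rewrite !mul0r invr0 mulr0 mul0e.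
have G_gt0 : 0 < G by rewrite lt_neqAle eq_sym G_neq0 sqr_ge0.
have xb_gt0 : 0 < x `^ beta by rewrite powR_gt0.
have inv_ge0 : (0 <= ((G * x `^ beta)^-1)%:E)%E by rewrite lee_fin invr_ge0 mulr_ge0 ?ltW.
have integrand_le : (\int[mu]_(z in `]0%R, x[)
      ((z `^ (alpha - 2))%:E * tail_int sigma alpha (fun y : R => (y `^ beta)%R) z) <=
    \int[mu]_(z in `]0%R, x[) (c * z `^ (beta - 1))%:E)%E.
  apply: ge0_le_integral_nomeas => z.
    move=> _; apply: mule_ge0; first by rewrite lee_fin powR_ge0.
    by apply: integral_ge0 => y _; rewrite lee_fin mulr_ge0// powR_ge0.
  rewrite /= in_itv/= => /andP[z_gt0 _].
  have zpow_ge0 : (0 <= (z `^ (alpha - 2))%:E)%E by rewrite lee_fin powR_ge0.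
  apply: le_trans (lee_wpmul2l zpow_ge0 (tail_le z z_gt0)) _.
  have -> : alpha - 2 = (beta - 1) + beta by field.
  rewrite -EFinM lee_fin powRD ?(gt_eqF z_gt0) ?implybT//.
  by rewrite le_eqVlt; apply/predU1P; left; field; rewrite gt_eqF ?powR_gt0.
apply: le_trans (lee_wpmul2l inv_ge0 integrand_le) _.
under eq_integral do rewrite EFinM.
rewrite ge0_integralZl_EFin//; last 2 first.
- by move=> z _; rewrite lee_fin powR_ge0.
- by apply/measurable_EFinP; apply: measurable_funTS; exact: measurable_powR.
have c_ge0' : (0 <= c%:E)%E by rewrite lee_fin.
have := integral_powR_itvoo_le _ _ x_gt0 beta_gt0.
move=> /(lee_wpmul2l c_ge0')/(lee_wpmul2l inv_ge0)/le_trans; apply.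
rewrite -!EFinM lee_fin le_eqVlt; apply/predU1P; left.
by field; rewrite G_neq0 subr_eq0 gt_eqF// gt_eqF.
Qed.

End II_plus_bound.

Theorem lemma3p4 (R : realType) (alpha : R) (sigma : R -> R) :
  1 < alpha -> alpha < 2 ->
  continuous sigma ->
  (forall y, 0 < sigma y) ->
  (delta_plus sigma alpha < +oo)%E ->
  forall x : R, 0 < x ->
    (II_plus sigma alpha (fun y : R => (y `^ ((alpha - 1) / 2))%R) x <=
     (4 / (Gamma (alpha / 2) ^+ 2 * (alpha - 1)))%:E * delta_plus sigma alpha)%E.
Proof.
move=> alpha_gt1 _ sigma_cont _ delta_lt_oo x x_gt0.
have delta_ge0 := delta_plus_ge0 alpha sigma.
have [d dE] : exists d, delta_plus sigma alpha = d%:E.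
  by exists (fine (delta_plus sigma alpha)); rewrite fineK// ge0_fin_numE.
have d_ge0 : 0 <= d by rewrite -lee_fin -dE.
have tail_le z : 0 < z ->
    (tail_int sigma alpha (fun y : R => (y `^ ((alpha - 1) / 2))%R) z <=
     (d * 2 / z `^ ((alpha - 1) / 2))%:E)%E.
  move=> z_gt0; rewrite mulrAC.
  apply: (@tail_moment_le R (fun y => sigma y `^ (- alpha))) => //.
  - by move=> y; exact: powR_ge0.
  - exact: measurableT_comp (measurable_powR _) (continuous_measurable_fun sigma_cont).
  - by rewrite divr_gt0// subr_gt0.
  - by move=> t; exact: tail_sigma_le.
apply: le_trans (II_plus_le _ _ alpha_gt1 _ _ _ x_gt0 tail_le) _; first by rewrite mulr_ge0.
by rewrite dE -EFinM lee_fin le_eqVlt; apply/predU1P; left; ring.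
Qed.
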